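(* Let $f\in\mathbb{C}[h]$ and let $V$ be a simple $\mathcal{H}(f)$-module with $\dim V=n<\infty$. If $yV=V$ and $x^nV=0$, then $V\cong B'_{\mathcal{H}(f)}(\lambda,\dot z,a)$ for some $\dot z\in\mathbb{C}$, $a\in\mathbb{C}^*$ and $\lambda\in S_f$ with $|\lambda|=n$ such that $\lambda(i)+\dot z=0$ for some $i\in\mathbb{Z}$.
   Context: For $f(h)\in\mathbb{C}[h]$, $\mathcal{H}(f)$ is the unital associative $\mathbb{C}$-algebra generated by $x,y,h$ with relations $hx=xf(h)$, $yh=f(h)y$, $yx-xy=f(h)-h$. $S_f$ is the set of maps $\lambda:\mathbb{Z}\to\mathbb{C}$ with $f(\lambda(i))=\lambda(i+1)$ for all $i$; $|\lambda|$ is the nonnegative generator of the subgroup $\{m\in\mathbb{Z}\mid\lambda(i+m)=\lambda(i)\ \forall i\}$. For $\lambda\in S_f$ with $|\lambda|=m\neq0$, $\dot z\in\mathbb{C}$, $a\in\mathbb{C}^*$: $B'_{\mathcal{H}(f)}(\lambda,\dot z,a)$ is the quotient of $\mathbb{C}[t,t^{-1}]$ by $\mathbb{C}[t,t^{-1}](t^m-a)$, with $\mathcal{H}(f)$-action induced by $ht^i=\lambda(i)t^i$, $xt^i=(\lambda(i+1)+\dot z)t^{i+1}$, $yt^i=t^{i-1}$ ($i\in\mathbb{Z}$). *)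

From HB Require Import structures.
From mathcomp Require Import all_boot all_order all_algebra.
Set Implicit Arguments. Unset Strict Implicit. Unset Printing Implicit Defensive.
Import Order.TTheory GRing.Theory Num.Theory.
Local Open Scope ring_scope.

(* Convention: a module V of dimension n is F^n (row vectors), and an
   element g acts by v |-> v *m G.  Hence the operator composition "a b"
   (first b, then a) corresponds to the matrix product B *m A. *)

Definition poly_mx (F : fieldType) (n : nat) (f : {poly F}) (A : 'M[F]_n)
  : 'M[F]_n := \sum_(i < size f) f`_i *: A ^+ i.

(* (X, Y, H) is an H(f)-module structure on F^n:
   hx = x f(h), yh = f(h) y, yx - xy = f(h) - h. *)
Definition Hf_module (F : fieldType) (n : nat) (f : {poly F})
  (X Y H : 'M[F]_n) : Prop :=
  let fH := poly_mx f H in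
  [/\ X *m H = fH *m X, H *m Y = Y *m fH & X *m Y - Y *m X = fH - H].

Definition Hf_simple (F : fieldType) (n : nat) (X Y H : 'M[F]_n) : Prop :=
  (0 < n)%N /\
  forall U : 'M[F]_n,
    (U *m X <= U)%MS -> (U *m Y <= U)%MS -> (U *m H <= U)%MS ->
    (U == (0 : 'M[F]_n))%MS \/ row_full U.

Definition in_Sf (F : fieldType) (f : {poly F}) (lam : int -> F) : Prop :=
  forall i : int, f.[lam i] = lam (i + 1).

Definition lam_period (F : fieldType) (lam : int -> F) (m : nat) : Prop :=
  forall k : int, (forall i : int, lam (i + k) = lam i) <-> (m%:Z %| k)%Z.

(* image of t^i in C[t,t^-1]/(t^m - a), in the basis t^0,...,t^(m-1):
   t^i = a^(i div m) t^(i mod m) *)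
Definition tvec (F : fieldType) (m : nat) (a : F) (i : int) : 'rV[F]_m :=
  \row_(k < m) (if (k : nat) == absz (i %% m%:Z)%Z then a ^ (i %/ m%:Z)%Z else 0).

(* the matrices of x, y, h on B'(lam, zd, a) (row j = image of t^j) *)
Definition Bx (F : fieldType) (m : nat) (lam : int -> F) (zd a : F) : 'M[F]_m :=
  \matrix_(j < m) ((lam (j%:Z + 1) + zd) *: tvec m a (j%:Z + 1)).
Definition By (F : fieldType) (m : nat) (a : F) : 'M[F]_m :=
  \matrix_(j < m) tvec m a (j%:Z - 1).
Definition Bh (F : fieldType) (m : nat) (lam : int -> F) (a : F) : 'M[F]_m :=
  \matrix_(j < m) (lam j%:Z *: tvec m a j%:Z).

Definition iso_B (F : fieldType) (n : nat) (X Y H : 'M[F]_n)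
  (lam : int -> F) (zd a : F) : Prop :=
  exists2 P : 'M[F]_n, P \in unitmx &
    [/\ X *m P = P *m Bx n lam zd a, Y *m P = P *m By n a
      & H *m P = P *m Bh n lam a].

From HB Require Import structures.
From mathcomp Require Import all_boot all_order all_algebra.
Set Implicit Arguments. Unset Strict Implicit. Unset Printing Implicit Defensive.
Import Order.TTheory GRing.Theory Num.Theory.
Local Open Scope ring_scope.

(* Vectors are rows and operators act on the right, so the
   operator Z = YX - H is the element xy - h of H(f).  Let Yi = Y^-1.
   1. Z commutes with X, Y and H (central_commute); by Schur's lemma for the
      simple module over the algebraically closed field it is a scalar zd
      (commuting_scalar), hence X = Yi (H + zd).
   2. Since HY = Y f(H), Yi maps the mu-eigenvectors of H to f(mu)-eigenvectors
      (eigen_shift), so the finite spectrum of H contains a periodic f-orbit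
      nu, f(nu), ..., of minimal period p <= n (periodic_eigenvalue).
   3. Yi^p stabilises the nu-eigenspace of H; an eigenvector v0 of it there
      (stable_eigenvector), v0 Yi^p = a v0, generates the vectors
      w_k = v0 Yi^k (orbit_vec) on which H, X, Y act by the formulas of B'
      with lam(k) = f^k(nu) and t^(k+p) = a t^k (section CyclicVectors).
   4. By simplicity w_0, ..., w_(p-1) span F^n (orbit_span_full), so p = n and
      these vectors form a basis realising the isomorphism with B'
      (iso_B_of_basis).  Finally X^n w_0 = 0 forces one of the weights
      lam(k) + zd to vanish (nilpotent_weight). *)

Lemma modz_absz (i : int) (n : nat) : (0 < n)%N ->
  (absz (i %% n%:Z)%Z)%:Z = (i %% n%:Z)%Z /\ (absz (i %% n%:Z)%Z < n)%N.
Proof.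
move=> n0; have ge : 0 <= (i %% n%:Z)%Z.
  by apply: modz_ge0; rewrite eqz_nat -lt0n.
have e : (absz (i %% n%:Z)%Z)%:Z = (i %% n%:Z)%Z by rewrite abszE ger0_norm.
by split=> //; rewrite -ltz_nat e ltz_pmod // ltz_nat.
Qed.

Lemma iter_modn (T : Type) (g : T -> T) (x : T) (p k : nat) :
  iter p g x = x -> iter (k %% p) g x = iter k g x.
Proof.
move=> cyc; have iter_mul q : iter (q * p) g x = x.
  by elim: q => [|q IH] //; rewrite mulSn iterD IH cyc.
by rewrite {2}(divn_eq k p) addnC iterD iter_mul.
Qed.

Definition orbit_seq (T : Type) (g : T -> T) (x : T) (n : nat) (i : int) : T :=
  iter (absz (i %% n%:Z)%Z) g x.

Section PeriodicOrbit.
Variables (T : Type) (g : T -> T) (x : T) (n : nat).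
Hypothesis cyc : iter n g x = x.

Lemma orbit_seq_nat (k : nat) : orbit_seq g x n k = iter k g x.
Proof. by rewrite /orbit_seq modz_nat absz_nat iter_modn. Qed.

Lemma orbit_seqS (i : int) : (0 < n)%N ->
  orbit_seq g x n (i + 1) = g (orbit_seq g x n i).
Proof.
move=> n0; have [ei _] := modz_absz i n0.
rewrite /orbit_seq -modzDml -ei -(PoszD _ 1) modz_nat !absz_nat iter_modn //.
by rewrite addn1.
Qed.

End PeriodicOrbit.

Lemma orbit_seq_period (F : fieldType) (g : F -> F) (x : F) (n : nat) :
  (0 < n)%N -> iter n g x = x ->
  (forall q, (0 < q)%N -> iter q g x = x -> (n <= q)%N) ->
  lam_period (orbit_seq g x n) n.
Proof.
move=> n0 cyc minn k; split; last first.
  by move=> dk i; rewrite /orbit_seq -(divzK dk) addrC modzMDl.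
move/(_ 0); rewrite add0r (orbit_seq_nat cyc 0) /orbit_seq => e.
have [ek lk] := modz_absz k n0.
apply/dvdz_mod0P; rewrite -ek; apply/eqP; rewrite eqz_nat; apply/negPn/negP.
by rewrite -lt0n => /minn /(_ e); rewrite leqNgt lk.
Qed.

Lemma eigenvalue_exists (F : closedFieldType) n (A : 'M[F]_n) :
  (0 < n)%N -> exists mu, eigenvalue A mu.
Proof.
move=> n0; have /closed_rootP [mu rmu] : size (char_poly A) != 1%N.
  by rewrite size_char_poly; case: n A n0.
by exists mu; rewrite eigenvalue_root_char.
Qed.

Lemma stable_eigenvector (F : closedFieldType) m n (K : 'M[F]_(m, n))
    (A : 'M[F]_n) :
  K != 0 -> (K *m A <= K)%MS ->
  exists a (v : 'rV_n), [/\ (v <= K)%MS, v != 0 & v *m A = a *: v].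
Proof.
move=> Kn KA; set B := row_base K.
have BK : (B :=: K)%MS := eq_row_base K.
pose M := B *m A *m pinvmx B.
have MB : M *m B = B *m A by rewrite mulmxKpV // (eqmxMr _ BK) BK.
have r0 : (0 < \rank K)%N by rewrite lt0n mxrank_eq0.
have [a /eigenvalueP [u uM un]] := eigenvalue_exists M r0.
exists a, (u *m B); split.
- by rewrite -BK submxMl.
- by rewrite mulmx_free_eq0 // row_base_free.
- by rewrite -mulmxA -MB mulmxA uM scalemxAl.
Qed.

Lemma poly_mx_eigen (F : fieldType) m n (f : {poly F}) (A : 'M[F]_n)
    (W : 'M[F]_(m, n)) mu :
  W *m A = mu *: W -> W *m poly_mx f A = f.[mu] *: W.
Proof.
move=> WA; have WAk k : W *m A ^+ k = mu ^+ k *: W.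
  elim: k => [|k IH]; first by rewrite !expr0 mulmx1 scale1r.
  by rewrite exprSr -mulmxE mulmxA IH -scalemxAl WA scalerA exprSr.
rewrite /poly_mx mulmx_sumr horner_coef scaler_suml; apply: eq_bigr => i _.
by rewrite -scalemxAr WAk scalerA.
Qed.

(* If g maps the spectrum of H into itself, the spectrum contains a periodic
   point of g whose minimal period is at most n (pigeonhole on the at most n
   roots of the characteristic polynomial). *)
Lemma periodic_eigenvalue (F : fieldType) n (H : 'M[F]_n) (g : F -> F) mu :
  (forall x, eigenvalue H x -> eigenvalue H (g x)) -> eigenvalue H mu ->
  exists nu p, [/\ eigenvalue H nu, (0 < p <= n)%N, iter p g nu = nu
    & forall q, (0 < q)%N -> iter q g nu = nu -> (p <= q)%N].
Proof.
move=> Hg Hmu; have Hiter k : eigenvalue H (iter k g mu).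
  by elim: k => [|k IH] //=; apply: Hg.
pose s := [seq iter k g mu | k <- iota 0 n.+1].
have /(uniqPn 0) [i [j [ij]]] : ~~ uniq s.
  apply/negP => us.
  suff /(max_poly_roots (monic_neq0 (char_poly_monic H))) :
      all (root (char_poly H)) s.
    by move/(_ us); rewrite size_map size_iota size_char_poly ltnn.
  by apply/allP => _ /mapP [k _ ->]; rewrite -eigenvalue_root_char.
rewrite size_map size_iota => jn.
rewrite !(nth_map 0%N) ?size_iota ?(ltn_trans ij) //.
rewrite !nth_iota ?(ltn_trans ij) // !add0n => eqij.
pose P q := (0 < q)%N && (iter q g (iter i g mu) == iter i g mu).
have Pji : P (j - i)%N by rewrite /P subn_gt0 ij /= -iterD subnK ?eqij // ltnW.
have [p /andP [p0 /eqP cyc] pmin] := find_ex_minn (ex_intro P _ Pji).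
exists (iter i g mu), p; split=> // [|q q0 cycq].
  by rewrite p0 (leq_trans (pmin _ Pji)) // (leq_trans (leq_subr _ _)).
by apply: pmin; rewrite /P q0 cycq /=.
Qed.

Lemma quasi_periodic_mod (F : fieldType) n p (a : F) (w : nat -> 'rV[F]_n) :
  (forall k, w (k + p)%N = a *: w k) ->
  forall k, w k = a ^+ (k %/ p) *: w (k %% p)%N.
Proof.
move=> wp k; rewrite {1}(divn_eq k p); elim: (k %/ p)%N => [|q IH].
  by rewrite mul0n add0n expr0 scale1r.
by rewrite mulSn -addnA addnC wp IH scalerA exprS.
Qed.

(* For such a sequence, a matrix lowering the index (w_(k+1) Y = w_k) sends
   w_0 back to a^-1 w_(p-1): this is y t^0 = t^-1 = a^-1 t^(p-1) in B'. *)
Lemma quasi_periodic_wrap (F : fieldType) n p (a : F) (w : nat -> 'rV[F]_n)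
    (Y : 'M[F]_n) :
  (0 < p)%N -> a != 0 -> (forall k, w (k + p)%N = a *: w k) ->
  (forall k, w k.+1 *m Y = w k) -> w 0%N *m Y = a^-1 *: w p.-1.
Proof.
move=> p0 a0 wp wY; have e : w p.-1.+1 = a *: w 0%N by rewrite prednK // -wp.
by rewrite -(wY p.-1) e -scalemxAl scalerK.
Qed.

Definition orbit_vec (F : fieldType) n (A : 'M[F]_n) (v : 'rV[F]_n) (k : nat)
  : 'rV[F]_n := v *m A ^+ k.

Section HfModule.
Variables (F : fieldType) (f : {poly F}) (n : nat) (X Y H : 'M[F]_n).
Hypotheses (XH : X *m H = poly_mx f H *m X) (HY : H *m Y = Y *m poly_mx f H)
  (XY : X *m Y - Y *m X = poly_mx f H - H).

Lemma central_commute : let Z := Y *m X - H in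
  [/\ Z *m X = X *m Z, Z *m Y = Y *m Z & Z *m H = H *m Z].
Proof.
have XY' : X *m Y = Y *m X + (poly_mx f H - H) by rewrite -XY addrC subrK.
split; rewrite mulmxBl mulmxBr.
- rewrite (mulmxA X Y X) XY' mulmxDl mulmxBl -XH -!mulmxA.
  by rewrite addrCA addrAC subrr add0r.
- rewrite -(mulmxA Y X Y) XY' mulmxDr mulmxBr -HY !mulmxA.
  by rewrite addrCA addrAC subrr add0r.
- by rewrite -!mulmxA XH !mulmxA HY.
Qed.

Hypothesis simple : Hf_simple X Y H.

Lemma submodule_full m (W : 'M_(m, n)) : W != 0 ->
  (W *m X <= W)%MS -> (W *m Y <= W)%MS -> (W *m H <= W)%MS -> row_full W.
Proof.
have gen (A : 'M_n) : (W *m A <= W)%MS -> (<<W>> *m A <= <<W>>)%MS.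
  by rewrite (eqmxMr _ (genmxE W)) genmxE.
move=> Wn WX WY WH; have [_ /(_ _ (gen _ WX) (gen _ WY) (gen _ WH))] := simple.
case=> [/andP [] | ]; last by rewrite /row_full mxrank_gen.
by rewrite genmxE submx0 (negbTE Wn).
Qed.

(* Schur's lemma: an endomorphism of the simple module with an eigenvalue zd
   is the scalar zd (its zd-eigenspace is a nonzero submodule). *)
Lemma commuting_scalar (Z : 'M_n) zd : eigenvalue Z zd ->
  Z *m X = X *m Z -> Z *m Y = Y *m Z -> Z *m H = H *m Z -> Z = zd%:M.
Proof.
move=> Zzd ZX ZY ZH; pose U := eigenspace Z zd.
have UZ : U *m Z = zd *: U by apply/eigenspaceP.
have stable (A : 'M_n) : Z *m A = A *m Z -> (U *m A <= U)%MS.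
  by move=> ZA; apply/eigenspaceP; rewrite -mulmxA -ZA mulmxA UZ scalemxAl.
have /row_fullP [B BU] :=
  submodule_full Zzd (stable _ ZX) (stable _ ZY) (stable _ ZH).
by move/(congr1 (mulmx B)): UZ; rewrite mulmxA BU mul1mx -scalemxAr BU scalemx1.
Qed.

Hypothesis Yu : Y \in unitmx.

(* y^-1 raises H-weights along f: from HY = Y f(H). *)
Lemma eigen_shift m (W : 'M_(m, n)) mu :
  W *m H = mu *: W -> W *m invmx Y *m H = f.[mu] *: (W *m invmx Y).
Proof.
have YiH : invmx Y *m H = poly_mx f H *m invmx Y.
  by rewrite -[LHS](mulmxK Yu) -(mulmxA _ H Y) HY mulmxA mulVmx // mul1mx.
by move=> WH; rewrite -mulmxA YiH mulmxA (poly_mx_eigen _ WH) -scalemxAl.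
Qed.

Lemma eigen_shift_iter m (W : 'M_(m, n)) mu k :
  W *m H = mu *: W ->
  W *m invmx Y ^+ k *m H = iter k (horner f) mu *: (W *m invmx Y ^+ k).
Proof.
move=> WH; elim: k => [|k IH]; first by rewrite expr0 mulmx1.
by rewrite exprSr -mulmxE mulmxA (eigen_shift IH).
Qed.

Lemma eigenvalue_shift mu : eigenvalue H mu -> eigenvalue H f.[mu].
Proof.
move=> /eigenvalueP [v vH vn]; apply/eigenvalueP; exists (v *m invmx Y).
  exact: eigen_shift.
by rewrite mulmx_free_eq0 // row_free_unit unitmx_inv.
Qed.

Section CyclicVectors.
Variables (zd nu a : F) (p : nat) (v0 : 'rV[F]_n).
Hypotheses (Xe : X = invmx Y *m (H + zd%:M)) (v0H : v0 *m H = nu *: v0)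
  (v0Y : v0 *m invmx Y ^+ p = a *: v0) (v0n : v0 != 0) (p0 : (0 < p)%N).

Local Notation w := (orbit_vec (invmx Y) v0).

Lemma orbit_H k : w k *m H = iter k (horner f) nu *: w k.
Proof. exact: eigen_shift_iter. Qed.

Lemma orbit_next k : w k *m invmx Y = w k.+1.
Proof. by rewrite /orbit_vec exprSr -mulmxE mulmxA. Qed.

Lemma orbit_X k : w k *m X = (iter k.+1 (horner f) nu + zd) *: w k.+1.
Proof.
by rewrite Xe mulmxA orbit_next mulmxDr orbit_H mul_mx_scalar scalerDl.
Qed.

Lemma orbit_Y k : w k.+1 *m Y = w k.
Proof. by rewrite -orbit_next mulmxKV. Qed.

Lemma orbit_period k : w (k + p)%N = a *: w k.
Proof. by rewrite /orbit_vec addnC exprD -mulmxE mulmxA v0Y scalemxAl. Qed.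

Lemma orbit_neq0 k : w k != 0.
Proof.
elim: k => [|k IH]; first by rewrite /orbit_vec expr0 mulmx1.
by rewrite -orbit_next mulmx_free_eq0 // row_free_unit unitmx_inv.
Qed.

Lemma orbit_scalar_neq0 : a != 0.
Proof.
by apply: contraNneq (orbit_neq0 p) => a0; rewrite /orbit_vec v0Y a0 scale0r.
Qed.

(* w_0, ..., w_(p-1) span a nonzero submodule, hence all of F^n. *)
Lemma orbit_span_full : row_full (\matrix_(k < p) w k).
Proof.
set W := \matrix_(k < p) w k.
have w_sub k : (w k <= W)%MS.
  rewrite (quasi_periodic_mod orbit_period) scalemx_sub //.
  by have := row_sub (Ordinal (ltn_pmod k p0)) W; rewrite rowK.
have stable (A : 'M_n) : (forall k, (w k *m A <= W)%MS) -> (W *m A <= W)%MS.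
  by move=> wA; apply/row_subP => k; rewrite row_mul rowK.
have wY0 := quasi_periodic_wrap p0 orbit_scalar_neq0 orbit_period orbit_Y.
apply: submodule_full.
- apply: contraNneq (orbit_neq0 0) => W0.
  by have := w_sub 0%N; rewrite W0 => /submx0null ->.
- by apply: stable => k; rewrite orbit_X scalemx_sub.
- by apply: stable => -[|k]; rewrite ?wY0 ?orbit_Y ?scalemx_sub.
- by apply: stable => k; rewrite orbit_H scalemx_sub.
Qed.

End CyclicVectors.
End HfModule.

Lemma intertwine_invmx (F : fieldType) n (Q A B : 'M[F]_n) : Q \in unitmx ->
  B *m Q = Q *m A -> A *m invmx Q = invmx Q *m B.
Proof. by move=> Qu e; rewrite -[B](mulmxK Qu) e !mulmxA mulVmx // mul1mx. Qed.

(* A basis w_0, ..., w_(n-1), extended by w_(k+n) = a w_k, on which X, Y, H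
   act as x, y, h on the t^k of B'(lam, zd, a), identifies the module with
   B': the image of t^i in B' is sent to a^(i div n) w_(i mod n). *)
Lemma iso_B_of_basis (F : fieldType) n (X Y H : 'M[F]_n) (lam : int -> F)
    (zd a : F) (w : nat -> 'rV[F]_n) :
  (0 < n)%N -> a != 0 -> \matrix_(k < n) w k \in unitmx ->
  (forall k, w (k + n)%N = a *: w k) ->
  (forall k : nat, w k *m X = (lam k.+1 + zd) *: w k.+1) ->
  (forall k, w k.+1 *m Y = w k) ->
  (forall k : nat, w k *m H = lam k *: w k) ->
  iso_B X Y H lam zd a.
Proof.
move=> n0 a0 Wu wn wX wY wH; set W := \matrix_(k < n) w k.
have tvE (t : int) :
    tvec n a t *m W = a ^ (t %/ n%:Z)%Z *: w (absz (t %% n%:Z)%Z).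
  have [_ lt] := modz_absz t n0.
  have -> : tvec n a t = a ^ (t %/ n%:Z)%Z *: delta_mx 0 (Ordinal lt).
    apply/rowP => k; rewrite !mxE eqxx /=.
    have -> : (k == Ordinal lt) = (k == absz (t %% n%:Z)%Z :> nat) by [].
    by case: ifP; rewrite ?mulr1 ?mulr0.
  by rewrite -scalemxAl -rowE rowK.
have tvN (k : nat) : tvec n a k *m W = w k.
  by rewrite tvE divz_nat modz_nat absz_nat /= -(quasi_periodic_mod wn).
exists (invmx W); first by rewrite unitmx_inv.
split; apply: intertwine_invmx => //; apply/row_matrixP => l;
  rewrite !row_mul !rowK.
- by rewrite -scalemxAl -(PoszD _ 1) addn1 tvN wX.
- case: l => -[|l] ln /=; last first.
    have -> : l.+1%:Z - 1 = l%:Z by rewrite -addn1 PoszD addrK.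
    by rewrite tvN wY.
  have e1 : 0%:Z - 1 = (-1) * n%:Z + (n.-1)%:Z.
    by rewrite predn_int // mulN1r addrA addNr.
  have r1 : 0 <= (n.-1)%:Z < `|n%:Z|%:Z.
    by rewrite absz_nat ltz_nat prednK // le0z_nat leqnn.
  rewrite tvE (quasi_periodic_wrap n0 a0 wn wY) e1.
  by rewrite divzMDl ?divz_small ?eqz_nat -?lt0n // addr0 modzMDl modz_small.
- by rewrite -scalemxAl tvN wH.
Qed.

Lemma nilpotent_weight (F : fieldType) n (X : 'M[F]_n) (lam : int -> F)
    (zd a : F) (w : nat -> 'rV[F]_n) :
  w 0%N != 0 -> a != 0 -> w n = a *: w 0%N ->
  (forall k : nat, w k *m X = (lam k.+1 + zd) *: w k.+1) -> X ^+ n = 0 ->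
  exists i : int, lam i + zd = 0.
Proof.
move=> w0 a0 wn wX Xn.
have wXk k : w 0%N *m X ^+ k = (\prod_(j < k) (lam j.+1 + zd)) *: w k.
  elim: k => [|k IH]; first by rewrite expr0 mulmx1 big_ord0 scale1r.
  by rewrite exprSr -mulmxE mulmxA IH -scalemxAl wX scalerA big_ord_recr.
have := wXk n; rewrite Xn mulmx0 wn scalerA => /esym/eqP.
rewrite scaler_eq0 (negbTE w0) orbF mulf_eq0 (negbTE a0) orbF.
by case/prodf_eq0 => j _ /eqP; exists j.+1.
Qed.

Theorem lemma10 (F : closedFieldType) (hF : [pchar F] =i pred0)
  (f : {poly F}) (n : nat) (X Y H : 'M[F]_n) :
  Hf_module f X Y H -> Hf_simple X Y H ->
  row_full Y -> X ^+ n = 0 ->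
  exists (zd a : F) (lam : int -> F),
    [/\ a != 0, in_Sf f lam, lam_period lam n,
        (exists i : int, lam i + zd = 0) & iso_B X Y H lam zd a].
Proof.
move=> [XH HY XY] simple fullY Xn; have [n0 _] := simple.
have Yu : Y \in unitmx by rewrite -row_full_unit.
have [ZX ZY ZH] := central_commute XH HY XY.
have [zd Zzd] := eigenvalue_exists (Y *m X - H) n0.
have Xe : X = invmx Y *m (H + zd%:M).
  by rewrite -(commuting_scalar simple Zzd ZX ZY ZH) addrC subrK mulKmx.
have [mu Hmu] := eigenvalue_exists H n0.
have [nu [p [Hnu /andP [p0 pn] cyc pmin]]] :=
  periodic_eigenvalue (eigenvalue_shift HY Yu) Hmu.
have Kstable : (eigenspace H nu *m invmx Y ^+ p <= eigenspace H nu)%MS.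
  apply/eigenspaceP; rewrite (eigen_shift_iter HY Yu (mu := nu)) ?cyc //.
  exact/eigenspaceP.
have [a [v0 [/eigenspaceP v0H v0n v0Y]]] := stable_eigenvector Hnu Kstable.
have /eqP rankW := orbit_span_full HY simple Yu Xe v0H v0Y v0n p0.
have pn' : p = n by apply/eqP; rewrite eqn_leq pn -{1}rankW rank_leq_row.
subst p; have a0 := orbit_scalar_neq0 Yu v0Y v0n.
have lamE := orbit_seq_nat cyc.
exists zd, a, (orbit_seq (horner f) nu n); split=> //.
- by move=> i; rewrite orbit_seqS.
- exact: orbit_seq_period.
- apply: (nilpotent_weight (w := orbit_vec (invmx Y) v0) _ a0 _ _ Xn).
  + by rewrite /orbit_vec expr0 mulmx1.
  + exact: (orbit_period v0Y 0).
  + by move=> k; rewrite lamE (orbit_X HY Yu Xe v0H).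
- apply: (iso_B_of_basis (w := orbit_vec (invmx Y) v0)) => // [|k|k|k|k].
  + by rewrite -row_full_unit /row_full rankW.
  + exact: orbit_period.
  + by rewrite !lamE (orbit_X HY Yu Xe v0H).
  + exact: (orbit_Y Yu).
  + by rewrite lamE (orbit_H HY Yu v0H).
Qed.
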